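(* Let $a_1,\dots,a_n$ be positive integers and $B,k$ integers with $\sum_{i=1}^n a_i=Bk$. Let $G$ be the complete bipartite graph $K_{k,n}$ with parts $\{v_1,\dots,v_k\}$ and $\{w_1,\dots,w_n\}$, where every edge incident to $w_i$ has weight $a_i$, and put target outdegrees $d_{w_i}=a_i$ and $d_{v_j}=Bk-B$. Then $\{a_1,\dots,a_n\}$ (as a multiset) can be partitioned into $k$ parts each with sum exactly $B$ if and only if $G$ has an orientation in which every vertex $u$ has total weight of outgoing edges exactly $d_u$.
   Context: An orientation of an undirected graph chooses a direction for each edge; the out-weight of a vertex is the sum of weights of the edges directed out of it. *)

From mathcomp Require Import all_boot all_order all_algebra.
Set Implicit Arguments. Unset Strict Implicit. Unset Printing Implicit Defensive.
Import Order.TTheory GRing.Theory Num.Theory.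
Local Open Scope ring_scope.

(* A weighted undirected (multi)graph: vertex type V, edge type E, each edge
   e has two endpoints [ends e] and an integer weight [wt e].
   An orientation is o : E -> bool; [o e = true] directs e from (ends e).1
   to (ends e).2, [o e = false] from (ends e).2 to (ends e).1. *)
Definition tail (V E : finType) (ends : E -> V * V) (o : E -> bool) (e : E) : V :=
  if o e then (ends e).1 else (ends e).2.

Definition outweight (V E : finType) (ends : E -> V * V) (wt : E -> int)
    (o : E -> bool) (u : V) : int :=
  \sum_(e : E | tail ends o e == u) wt e.

(* The complete bipartite graph K_{k,n}: vertices inl j = v_j, inr i = w_i;
   one edge (j, i) joining v_j and w_i for every pair. *)
Definition Kkn_ends (k n : nat) (e : 'I_k * 'I_n) : ('I_k + 'I_n) * ('I_k + 'I_n) :=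
  (inl e.1, inr e.2).

Definition Kkn_wt (k n : nat) (a : 'I_n -> nat) (e : 'I_k * 'I_n) : int :=
  (a e.2)%:Z.

Definition Kkn_target (k n : nat) (a : 'I_n -> nat) (B : int) (u : 'I_k + 'I_n) : int :=
  match u with
  | inl _ => B * k%:Z - B
  | inr i => (a i)%:Z
  end.

Definition partitionable (k n : nat) (a : 'I_n -> nat) (B : int) : Prop :=
  exists p : 'I_n -> 'I_k, forall j : 'I_k, (\sum_(i | p i == j) (a i)%:Z) = B.

From mathcomp Require Import all_boot all_order all_algebra.
Import Order.TTheory GRing.Theory Num.Theory.
Local Open Scope ring_scope.
Set Implicit Arguments.
Unset Strict Implicit.
Unset Printing Implicit Defensive.

(* An edge leaves w_i exactly when it is directed towards some v_j, and then it
   carries weight a_i; so the out-weight a_i > 0 at w_i forces w_i to send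
   exactly one edge, to a vertex v_(p i), and p is a partition map. The
   out-weight of v_j is the total weight B k minus the weight sent to v_j,
   i.e. B k minus the sum of part j; it equals B k - B iff that part sums to
   B. Conversely a partition p is realised by directing each w_i to v_(p i). *)

Lemma sum_pair_exchange (R : nmodType) (I J : finType) (F : I * J -> R) :
  \sum_(e : I * J) F e = \sum_(j : J) \sum_(i : I) F (i, j).
Proof. by rewrite exchange_big pair_big /=; apply: eq_bigr => -[]. Qed.

Section CompleteBipartiteOrientation.

Variables (n k : nat) (a : 'I_n -> nat) (o : 'I_k * 'I_n -> bool).

Local Notation out := (outweight (@Kkn_ends k n) (@Kkn_wt k n a) o).

Lemma outweight_inr i : out (inr i) = (a i)%:Z *+ #|[pred j | ~~ o (j, i)]|.
Proof.
rewrite /outweight big_mkcond sum_pair_exchange (bigD1 i) //=.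
rewrite [X in _ + X]big1 => [|i' ne_i'i].
  rewrite addr0 -sumr_const [RHS]big_mkcond; apply: eq_bigr => j _.
  by rewrite /tail /Kkn_wt inE /=; case: (o (j, i)); rewrite //= eqxx.
apply: big1 => j _; rewrite /tail /=; case: (o (j, i')) => //=.
by rewrite (inj_eq inr_inj) (negbTE ne_i'i).
Qed.

Lemma outweight_inl j :
  out (inl j) = \sum_(i < n) (a i)%:Z - \sum_(i | ~~ o (j, i)) (a i)%:Z.
Proof.
rewrite (bigID (fun i => ~~ o (j, i))) /= addrC addrK.
rewrite /outweight big_mkcond sum_pair_exchange [RHS]big_mkcond.
apply: eq_bigr => i _; rewrite (bigD1 j) //= [X in _ + X]big1 => [|j' ne_j'j].
  by rewrite addr0 /tail /Kkn_wt /=; case: (o (j, i)); rewrite //= eqxx.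
by rewrite /tail /=; case: (o (j', i)); rewrite //= (inj_eq inl_inj) (negbTE ne_j'j).
Qed.

Lemma outweight_inr_target i : (0 < a i)%N ->
  out (inr i) = (a i)%:Z <-> #|[pred j | ~~ o (j, i)]| = 1%N.
Proof.
move=> a_gt0; rewrite outweight_inr; split=> [|->]; last exact: mulr1n.
by rewrite -[X in _ = X]mulr1n => /mulrIn; apply; rewrite eqz_nat -lt0n.
Qed.

Lemma outweight_inl_target (B : int) j :
  \sum_(i < n) (a i)%:Z = B * k%:Z ->
  out (inl j) = B * k%:Z - B <-> \sum_(i | ~~ o (j, i)) (a i)%:Z = B.
Proof. by move=> sum_a; rewrite outweight_inl sum_a; split=> [/addrI/oppr_inj|->]. Qed.

End CompleteBipartiteOrientation.

Theorem lemma6p4 (n k : nat) (a : 'I_n -> nat) (B : int)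
  (apos : forall i, (0 < a i)%N)
  (hsum : (\sum_(i < n) (a i)%:Z) = B * k%:Z) :
  @partitionable k n a B <->
  exists o : 'I_k * 'I_n -> bool,
    forall u : 'I_k + 'I_n,
      outweight (@Kkn_ends k n) (@Kkn_wt k n a) o u = @Kkn_target k n a B u.
Proof.
split=> [[p part_p] | [o target_o]].
  exists (fun e => p e.2 != e.1) => -[j | i] /=.
    apply/outweight_inl_target => //; rewrite -(part_p j).
    by apply: eq_bigl => i; rewrite negbK eq_sym.
  apply/outweight_inr_target => //; rewrite -(card1 (p i)).
  by apply: eq_card => j; rewrite !inE negbK eq_sym.
have one_in i : #|[pred j | ~~ o (j, i)]| = 1%N.
  exact/(outweight_inr_target o (apos i))/(target_o (inr i)).
pose p i := sval (mem_card1 (one_in i)).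
have in_p i j : ~~ o (j, i) = (p i == j).
  by have := svalP (mem_card1 (one_in i)) j; rewrite !inE eq_sym.
exists p => j; rewrite -((outweight_inl_target o j hsum).1 (target_o (inl j))).
by apply: eq_bigl => i; rewrite in_p.
Qed.
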